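(* Let $(G,* )$ be a group and let $\mathcal{L}$ be a $T_0$-separating nest on $G$. If for every $g\in G$ and every $L\in\mathcal{L}$ we have $g*L\in\mathcal{L}$ and $L*g\in\mathcal{L}$, then $\triangleleft_{\mathcal{L}}$ is compatible with $*$.
   Context: A nest on $G$ is a family of subsets totally ordered by inclusion; it is $T_0$-separating if for all distinct $x,y$ some member contains exactly one of them. $x\triangleleft_{\mathcal{L}} y$ iff there exists $L\in\mathcal{L}$ with $x\in L$ and $y\notin L$. $g*L=\{g*l : l\in L\}$, $L*g=\{l*g : l\in L\}$. The order $\triangleleft_{\mathcal{L}}$ is compatible with $*$ if for all $a,b,g\in G$: $a\triangleleft_{\mathcal{L}} b$ if and only if ($a*g\triangleleft_{\mathcal{L}} b*g$ and $g*a\triangleleft_{\mathcal{L}} g*b$). *)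

Set Implicit Arguments.

Section Defs.
Variable G : Type.
Variable op : G -> G -> G.

Definition is_group : Prop :=
  (forall x y z, op x (op y z) = op (op x y) z) /\
  exists e : G,
    (forall x, op e x = x /\ op x e = x) /\
    (forall x, exists y, op x y = e /\ op y x = e).

Definition subset (A B : G -> Prop) : Prop := forall x, A x -> B x.

Definition is_nest (F : (G -> Prop) -> Prop) : Prop :=
  forall A B, F A -> F B -> subset A B \/ subset B A.

Definition T0_separating (F : (G -> Prop) -> Prop) : Prop :=
  forall x y, x <> y ->
    exists L, F L /\ ((L x /\ ~ L y) \/ (L y /\ ~ L x)).

Definition tri (F : (G -> Prop) -> Prop) (x y : G) : Prop :=
  exists L, F L /\ L x /\ ~ L y.

Definition lmul (g : G) (L : G -> Prop) : G -> Prop :=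
  fun x => exists l, L l /\ x = op g l.
Definition rmul (L : G -> Prop) (g : G) : G -> Prop :=
  fun x => exists l, L l /\ x = op l g.

Definition compatible (F : (G -> Prop) -> Prop) : Prop :=
  forall a b g, tri F a b <->
    (tri F (op a g) (op b g) /\ tri F (op g a) (op g b)).
End Defs.

(** Translations of a group are injective, so translating a set [L] with
    [a ∈ L], [b ∉ L] by [g] gives a member of the family containing the
    translate of [a] but not that of [b]; translating back by [g^-1] gives
    the converse. *)
From Stdlib Require Import FinFun.

Set Implicit Arguments.

Section Translation.
Variable G : Type.

Definition image (f : G -> G) (L : G -> Prop) : G -> Prop :=
  fun x => exists l, L l /\ x = f l.

Lemma tri_image (F : (G -> Prop) -> Prop) (f : G -> G) (a b : G) :
  Injective f -> (forall L, F L -> F (image f L)) ->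
  tri F a b -> tri F (f a) (f b).
Proof.
  intros f_inj F_image [L [FL [La notLb]]].
  exists (image f L); repeat split.
  - now apply F_image.
  - now exists a.
  - intros [l [Ll fb_fl]]. apply f_inj in fb_fl. subst. contradiction.
Qed.

Variable op : G -> G -> G.
Hypothesis op_group : is_group op.

Lemma group_inverse (g : G) :
  exists h, (forall x, op (op x g) h = x) /\ (forall x, op h (op g x) = x).
Proof.
  destruct op_group as [opA [e [op_unit op_inv]]].
  destruct (op_inv g) as [h [gh he]].
  exists h; split; intros x.
  - rewrite <- opA, gh. apply op_unit.
  - rewrite opA, he. apply op_unit.
Qed.

Lemma mulr_inj (g : G) : Injective (fun x => op x g).
Proof.
  destruct (group_inverse g) as [h [mulrK _]].
  intros x y xg_yg. now rewrite <- (mulrK x), <- (mulrK y), xg_yg.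
Qed.

Lemma mull_inj (g : G) : Injective (op g).
Proof.
  destruct (group_inverse g) as [h [_ mullK]].
  intros x y gx_gy. now rewrite <- (mullK x), <- (mullK y), gx_gy.
Qed.

End Translation.

Theorem proposition5p1 (G : Type) (op : G -> G -> G) (F : (G -> Prop) -> Prop)
  (Hgrp : is_group op) (Hnest : is_nest F) (HT0 : T0_separating F)
  (Hinv : forall g L, F L -> F (lmul op g L) /\ F (rmul op L g)) :
  compatible op F.
Proof.
  assert (F_mulr : forall g L, F L -> F (image (fun x => op x g) L))
    by (intros g L FL; exact (proj2 (Hinv g L FL))).
  assert (F_mull : forall g L, F L -> F (image (op g) L))
    by (intros g L FL; exact (proj1 (Hinv g L FL))).
  intros a b g; split.
  - intros ab; split.
    + exact (tri_image (mulr_inj Hgrp g) (F_mulr g) ab).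
    + exact (tri_image (mull_inj Hgrp g) (F_mull g) ab).
  - intros [abg _].
    destruct (group_inverse Hgrp g) as [h [mulrK _]].
    rewrite <- (mulrK a), <- (mulrK b).
    exact (tri_image (mulr_inj Hgrp h) (F_mulr h) abg).
Qed.
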